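(* For $n\ge1$ let $\mathbb{A}_n$ be $\mathbb{C}^n$ with basis $e_1,\dots,e_n$ and product $(a\cdot b)^i=a^ib^n$, i.e. $e_i\cdot e_j=\delta_j^n e_i$. Then for every $n$, $\mathbb{A}_n$ is an associative Novikov algebra; if $n\ge2$ it is non-commutative and the Lie algebra $(\mathbb{A}_n,[a,b]=a\cdot b-b\cdot a)$ is not nilpotent. Moreover: (i) every symmetric bilinear form $g$ on $\mathbb{A}_n$ satisfies $g(a\cdot b,c)=g(a,c\cdot b)$ for all $a,b,c$; (ii) a skew-symmetric bilinear form $f=(f_{ij})$ on $\mathbb{A}_n$ satisfies $f(a\cdot b,c)=f(a,c\cdot b)$ and $f(a\cdot b,c)+f(b\cdot c,a)+f(c\cdot a,b)=0$ for all $a,b,c$ if and only if $f_{ij}=0$ whenever $i\ne n$ and $j\ne n$; (iii) a symmetric bilinear form $h=(h_{ij})$ on $\mathbb{A}_n$ satisfies $h(a\cdot b,c)=h(a,c\cdot b)$ and $h(a,b\cdot c)=h(a,c\cdot b)$ for all $a,b,c$ (i.e. $h(a\cdot b,c)$ is totally symmetric) if and only if $h_{ij}=0$ whenever $i\ne n$ or $j\ne n$.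
   Context: A Novikov algebra is a complex vector space with a bilinear product $\cdot$ satisfying $(a\cdot b)\cdot c=(a\cdot c)\cdot b$ and $(a\cdot b)\cdot c-a\cdot(b\cdot c)=(b\cdot a)\cdot c-b\cdot(a\cdot c)$ for all $a,b,c$. For a bilinear form $f$, $f_{ij}=f(e_i,e_j)$. *)

From HB Require Import structures.
From mathcomp Require Import all_boot all_order all_algebra.
From mathcomp Require Import complex.
From mathcomp Require Import Rstruct.
Set Implicit Arguments. Unset Strict Implicit. Unset Printing Implicit Defensive.
Import Order.TTheory GRing.Theory Num.Theory.
Local Open Scope ring_scope.

Definition CC : fieldType := (Rdefinitions.R)[i].

(* Vectors of A_n: row vectors of size n with complex entries; e_i = delta_mx 0 i. *)
Notation vec n := 'rV[CC]_n.

Definition bilinear_prod (V : lmodType CC) (mul : V -> V -> V) : Prop :=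
  (forall (k : CC) (a b c : V), mul (k *: a + b) c = k *: mul a c + mul b c) /\
  (forall (k : CC) (a b c : V), mul a (k *: b + c) = k *: mul a b + mul a c).

Definition is_novikov (V : lmodType CC) (mul : V -> V -> V) : Prop :=
  [/\ bilinear_prod mul,
      (forall a b c : V, mul (mul a b) c = mul (mul a c) b) &
      (forall a b c : V, mul (mul a b) c - mul a (mul b c)
                         = mul (mul b a) c - mul b (mul a c))].

Definition is_associative (V : Type) (mul : V -> V -> V) : Prop :=
  forall a b c : V, mul (mul a b) c = mul a (mul b c).

Definition is_commutative (V : Type) (mul : V -> V -> V) : Prop :=
  forall a b : V, mul a b = mul b a.

Definition commutator (V : zmodType) (mul : V -> V -> V) (a b : V) : V :=
  mul a b - mul b a.

(* Nilpotency of a Lie algebra (V, br): some term of the lower central series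
   g^1 = g, g^{k+1} = [g, g^k] vanishes; g^{k+1} is spanned by the right-nested
   brackets [x_1, [x_2, ..., [x_k, x]...]], which is what we quantify over. *)
Definition lie_nilpotent (V : zmodType) (br : V -> V -> V) : Prop :=
  exists k : nat, forall (x : V) (xs : seq V), size xs = k -> foldr br x xs = 0.

(* The n-th coordinate b^n of b (the last one); the sum has exactly one term
   when n >= 1. *)
Definition lastcoord (n : nat) (b : vec n) : CC :=
  \sum_(j < n | (j : nat) == n.-1) b 0 j.

Definition Amul (n : nat) (a b : vec n) : vec n := \row_i (a 0 i * lastcoord b).

(* Bilinear forms on C^n are given by their Gram matrices F, F i j = f(e_i,e_j). *)
Definition bform (n : nat) (F : 'M[CC]_n) (a b : vec n) : CC := (a *m F *m b^T) 0 0.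

From HB Require Import structures.
From mathcomp Require Import all_boot all_order all_algebra.
From mathcomp Require Import complex.
From mathcomp Require Import Rstruct.
From mathcomp Require Import ring.
Import GRing.Theory.
Local Open Scope ring_scope.

(* The product of A_n is a . b = phi(b) a for the linear form phi(b) = b^n, so
   (a . b) . c = phi(b) phi(c) a = a . (b . c): the algebra is associative and
   right commutative, and associativity makes both sides of the left-symmetric
   identity vanish.  With phi(x) = 1 and phi(y) = 0, [x, y] = -y, so iterated
   brackets by x alternate between y and -y and the Lie algebra is not nilpotent.
   For any bilinear form, f(a . b, c) = phi(b) f(a, c) = f(a, c . b).  Testing the
   remaining identities on basis vectors gives the necessary vanishing of the
   Gram entries; conversely a skew form supported on the last row and column is
   f(a, c) = a^n f(e_n, c) - c^n f(e_n, a), and a symmetric form supported at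
   (n, n) is a^n c^n h_nn, for which the identities are polynomial identities. *)


Lemma left_symmetric_of_assoc (V : zmodType) (mul : V -> V -> V) :
  is_associative mul ->
  forall a b c, mul (mul a b) c - mul a (mul b c) = mul (mul b a) c - mul b (mul a c).
Proof. by move=> mulA a b c; rewrite !mulA !subrr. Qed.

Lemma not_lie_nilpotent (V : zmodType) (br : V -> V -> V) (x y : V) :
  y != 0 -> br x y = - y -> br x (- y) = y -> ~ lie_nilpotent br.
Proof.
move=> y_neq0 brxy brxNy [k nil_k].
have : foldr br y (nseq k x) \in [:: y; - y].
  elim: k {nil_k} => [|k IHk] /=; first by rewrite mem_head.
  move: IHk; rewrite !inE => /orP[] /eqP->; by rewrite ?brxy ?brxNy eqxx ?orbT.
by rewrite nil_k ?size_nseq // !inE !(eq_sym 0) oppr_eq0 orbb (negbTE y_neq0).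
Qed.

Section RightScalarProduct.

Variables (V : lmodType CC) (phi : V -> CC) (mul : V -> V -> V).
Hypothesis phiD : forall a b, phi (a + b) = phi a + phi b.
Hypothesis phiZ : forall k a, phi (k *: a) = k * phi a.
Hypothesis mulE : forall a b, mul a b = phi b *: a.

Lemma rscal_bilinear : bilinear_prod mul.
Proof.
split=> k a b c; rewrite !mulE; first by rewrite scalerDr !scalerA mulrC.
by rewrite phiD phiZ scalerDl scalerA.
Qed.

Lemma rscal_assoc : is_associative mul.
Proof. by move=> a b c; rewrite !mulE scalerA phiZ. Qed.

Lemma rscal_novikov : is_novikov mul.
Proof.
split; [exact: rscal_bilinear | | exact/left_symmetric_of_assoc/rscal_assoc].
by move=> a b c; rewrite !mulE !scalerA mulrC.
Qed.

Lemma commutator_rscal x y : commutator mul x y = phi y *: x - phi x *: y.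
Proof. by rewrite /commutator !mulE. Qed.

Variables (x y : V).
Hypotheses (phix : phi x = 1) (phiy : phi y = 0) (y_neq0 : y != 0).

Lemma rscal_not_commutative : ~ is_commutative mul.
Proof.
move=> mulC; move: y_neq0; have := mulC y x.
by rewrite !mulE phix phiy scale1r scale0r => ->; rewrite eqxx.
Qed.

Lemma rscal_not_lie_nilpotent : ~ lie_nilpotent (commutator mul).
Proof.
have phiNy : phi (- y) = 0 by rewrite -scaleN1r phiZ phiy mulr0.
apply: (@not_lie_nilpotent _ _ x y y_neq0);
  by rewrite commutator_rscal ?phiNy ?phiy phix scale0r scale1r sub0r ?opprK.
Qed.

End RightScalarProduct.

Lemma bformE n (F : 'M[CC]_n) a c :
  bform F a c = \sum_i \sum_j a 0 i * F i j * c 0 j.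
Proof.
rewrite /bform mxE exchange_big; apply: eq_bigr => j _.
by rewrite mxE mulr_suml; apply: eq_bigr => i _; rewrite !mxE.
Qed.

Lemma bformZl n (F : 'M[CC]_n) k a c : bform F (k *: a) c = k * bform F a c.
Proof. by rewrite /bform -!scalemxAl mxE. Qed.

Lemma bformZr n (F : 'M[CC]_n) k a c : bform F a (k *: c) = k * bform F a c.
Proof. by rewrite /bform linearZ /= -scalemxAr mxE. Qed.

Lemma bformNm n (F : 'M[CC]_n) a c : bform (- F) a c = - bform F a c.
Proof. by rewrite /bform mulmxN mulNmx mxE. Qed.

Lemma bform_tr n (F : 'M[CC]_n) a c : bform F^T a c = bform F c a.
Proof.
rewrite /bform; have -> : c *m F *m a^T = (a *m F^T *m c^T)^T.
  by rewrite !trmx_mul !trmxK mulmxA.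
by rewrite [RHS]mxE.
Qed.

Lemma bform_delta n (F : 'M[CC]_n) i j :
  bform F (delta_mx 0 i) (delta_mx 0 j) = F i j.
Proof. by rewrite /bform trmx_delta -rowE -colE !mxE. Qed.

Lemma bform_deltal n (F : 'M[CC]_n) i c :
  bform F (delta_mx 0 i) c = \sum_j F i j * c 0 j.
Proof. by rewrite /bform -rowE mxE; apply: eq_bigr => j _; rewrite !mxE. Qed.

Lemma bform_deltar n (F : 'M[CC]_n) a j :
  bform F a (delta_mx 0 j) = \sum_i a 0 i * F i j.
Proof. by rewrite /bform trmx_delta -colE !mxE. Qed.

Lemma bform_supp1 n (F : 'M[CC]_n) k l :
  (forall i j, (i != k) || (j != l) -> F i j = 0) ->
  forall a c, bform F a c = a 0 k * F k l * c 0 l.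
Proof.
move=> F0 a c; rewrite bformE (bigD1 k) //= [X in _ + X]big1 => [|i ik].
  rewrite addr0 (bigD1 l) //= big1 ?addr0 // => j jl.
  by rewrite F0 ?mulr0 ?mul0r // jl orbT.
by apply: big1 => j _; rewrite F0 ?mulr0 ?mul0r // ik.
Qed.

Lemma bform_supp_cross n (F : 'M[CC]_n) k :
  (forall i j, i != k -> j != k -> F i j = 0) ->
  forall a c, bform F a c = a 0 k * bform F (delta_mx 0 k) c
                           + c 0 k * bform F a (delta_mx 0 k) - a 0 k * c 0 k * F k k.
Proof.
move=> F0 a c; have col_k i : i != k -> \sum_j a 0 i * F i j * c 0 j = a 0 i * F i k * c 0 k.
  move=> ik; rewrite (bigD1 k) //= big1 ?addr0 // => j jk.
  by rewrite F0 ?mulr0 ?mul0r.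
rewrite bformE (bigD1 k) //= (eq_bigr _ col_k) -mulr_suml.
rewrite bform_deltal bform_deltar [\sum_i a 0 i * F i k](bigD1 k) //=.
have -> : \sum_j a 0 k * F k j * c 0 j = a 0 k * \sum_j F k j * c 0 j.
  by rewrite mulr_sumr; apply: eq_bigr => j _; rewrite mulrA.
ring.
Qed.

Lemma lastcoordD n (a b : vec n) : lastcoord (a + b) = lastcoord a + lastcoord b.
Proof. by rewrite /lastcoord -big_split; apply: eq_bigr => j _; rewrite mxE. Qed.

Lemma lastcoordZ n k (a : vec n) : lastcoord (k *: a) = k * lastcoord a.
Proof. by rewrite /lastcoord mulr_sumr; apply: eq_bigr => j _; rewrite mxE. Qed.

Lemma AmulE n (a b : vec n) : Amul a b = lastcoord b *: a.
Proof. by apply/rowP => i; rewrite !mxE mulrC. Qed.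

Lemma Amul_novikov n : is_novikov (@Amul n).
Proof. exact: rscal_novikov (@lastcoordD n) (@lastcoordZ n) (@AmulE n). Qed.

Lemma Amul_assoc n : is_associative (@Amul n).
Proof. exact: rscal_assoc (@lastcoordZ n) (@AmulE n). Qed.

Lemma bform_Amul_invariant n (F : 'M[CC]_n) a b c :
  bform F (Amul a b) c = bform F a (Amul c b).
Proof. by rewrite !AmulE bformZl bformZr. Qed.

Lemma lastcoordE n (b : vec n.+1) : lastcoord b = b 0 ord_max.
Proof. by rewrite /lastcoord (big_pred1 ord_max). Qed.

Lemma lastcoord_delta n (i : 'I_n.+1) : lastcoord (delta_mx 0 i) = (i == ord_max)%:R.
Proof. by rewrite lastcoordE mxE eqxx eq_sym. Qed.

Lemma Amul_not_commutative_not_lie_nilpotent n : (2 <= n)%N ->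
  ~ is_commutative (@Amul n) /\ ~ lie_nilpotent (commutator (@Amul n)).
Proof.
case: n => [|[|n]] // _.
have last_max : lastcoord (delta_mx 0 ord_max : vec n.+2) = 1.
  by rewrite lastcoord_delta eqxx.
have last_0 : lastcoord (delta_mx 0 ord0 : vec n.+2) = 0 by rewrite lastcoord_delta.
have e0_neq0 : delta_mx 0 ord0 != 0 :> vec n.+2.
  by apply/eqP => /rowP /(_ ord0); rewrite !mxE eqxx; apply/eqP; rewrite oner_eq0.
split; first exact: rscal_not_commutative (@AmulE _) _ _ last_max last_0 e0_neq0.
exact: rscal_not_lie_nilpotent (@lastcoordZ _) (@AmulE _) _ _ last_max last_0 e0_neq0.
Qed.

Lemma skew_Amul_iff n (F : 'M[CC]_n.+1) : F^T = - F ->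
  ((forall a b c : vec n.+1, bform F (Amul a b) c = bform F a (Amul c b)) /\
   (forall a b c : vec n.+1,
      bform F (Amul a b) c + bform F (Amul b c) a + bform F (Amul c a) b = 0))
  <-> (forall i j : 'I_n.+1, (i : nat) != n -> (j : nat) != n -> F i j = 0).
Proof.
move=> skewF; have Fskew a c : bform F a c = - bform F c a.
  by rewrite -bformNm -skewF bform_tr.
split=> [[_ Fcyc] i j iN jN | F0].
  have := Fcyc (delta_mx 0 i) (delta_mx 0 ord_max) (delta_mx 0 j).
  have [iN' jN'] : (i == ord_max) = false /\ (j == ord_max) = false.
    by split; apply: negbTE.
  by rewrite !AmulE !bformZl !lastcoord_delta !bform_delta eqxx iN' jN' !mul0r !addr0 mul1r.
split=> [a b c|]; first exact: bform_Amul_invariant.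
have FNN : F ord_max ord_max = 0.
  have := Fskew (delta_mx 0 ord_max) (delta_mx 0 ord_max).
  rewrite bform_delta => /eqP; rewrite -addr_eq0 -mulr2n Num.Theory.mulrn_eq0 /=.
  by move/eqP.
have Fform x y : bform F x y = x 0 ord_max * bform F (delta_mx 0 ord_max) y
                               - y 0 ord_max * bform F (delta_mx 0 ord_max) x.
  by rewrite {1}(@bform_supp_cross _ F ord_max F0) (Fskew x) FNN; ring.
by move=> a b c; rewrite !AmulE !bformZl (Fform a c) (Fform b a) (Fform c b) !lastcoordE; ring.
Qed.

Lemma sym_Amul_iff n (H : 'M[CC]_n.+1) : H^T = H ->
  ((forall a b c : vec n.+1, bform H (Amul a b) c = bform H a (Amul c b)) /\
   (forall a b c : vec n.+1, bform H a (Amul b c) = bform H a (Amul c b)))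
  <-> (forall i j : 'I_n.+1, ((i : nat) != n) || ((j : nat) != n) -> H i j = 0).
Proof.
move=> symH; split=> [[_ Hsym] | H0].
  have H0r (i j : 'I_n.+1) : (j : nat) != n -> H i j = 0.
    move=> jN; have := Hsym (delta_mx 0 i) (delta_mx 0 j) (delta_mx 0 ord_max).
    have jN' : (j == ord_max) = false by apply: negbTE.
    by rewrite !AmulE !bformZr !lastcoord_delta !bform_delta eqxx jN' mul1r mul0r.
  move=> i j /orP[iN|]; last exact: H0r.
  by rewrite -[H]symH mxE H0r.
split=> a b c; first exact: bform_Amul_invariant.
by rewrite !AmulE !bformZr !(@bform_supp1 _ H ord_max ord_max H0) !lastcoordE; ring.
Qed.

Theorem proposition6p1 (n : nat) (hn : (1 <= n)%N) :
  [/\ is_novikov (@Amul n) /\ is_associative (@Amul n),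
      (2 <= n)%N -> ~ is_commutative (@Amul n) /\
                    ~ lie_nilpotent (commutator (@Amul n)),
      (forall G : 'M[CC]_n, G^T = G ->
         forall a b c : vec n, bform G (Amul a b) c = bform G a (Amul c b)),
      (forall F : 'M[CC]_n, F^T = - F ->
         ((forall a b c : vec n, bform F (Amul a b) c = bform F a (Amul c b)) /\
          (forall a b c : vec n,
             bform F (Amul a b) c + bform F (Amul b c) a + bform F (Amul c a) b = 0))
         <-> (forall i j : 'I_n, (i : nat) != n.-1 -> (j : nat) != n.-1 -> F i j = 0))
    & (forall H : 'M[CC]_n, H^T = H ->
         ((forall a b c : vec n, bform H (Amul a b) c = bform H a (Amul c b)) /\
          (forall a b c : vec n, bform H a (Amul b c) = bform H a (Amul c b)))
         <-> (forall i j : 'I_n, ((i : nat) != n.-1) || ((j : nat) != n.-1) ->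
                H i j = 0))].
Proof.
case: n hn => // n _; split.
- exact: (conj (Amul_novikov _) (Amul_assoc _)).
- exact: Amul_not_commutative_not_lie_nilpotent.
- by move=> G _; apply: bform_Amul_invariant.
- exact: skew_Amul_iff.
- exact: sym_Amul_iff.
Qed.
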